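(* Let $G$ be a rooted graph, $(A,B)$ a separation of $G$, $\delta\in\mathbb N$, $H$ a graph in the $\delta$-folio of $G$, and $G_H$ a realization of $H$ in $G$ witnessed by $(\phi,\varphi)$. Let $Z=N_{G_H}[\phi(V(H))]$ and suppose $R(G)\cup Z\subseteq V(A)$. Let $S\subseteq V(B)\setminus V(A)$ be such that the $4\delta$-minor folio of $B\setminus S$ relative to $V(A)\cap V(B)$ is generic. Then $H$ belongs to the $\delta$-folio of $G\setminus S$.
   Context: A separation of $G$ is a pair $(A,B)$ of subgraphs with $G=A\cup B$, $E(A)\cap E(B)=\emptyset$. A rooted graph has roots $R(G)\subseteq V(G)$ with injective labels $\rho_G$. A rooted $H$ is a topological minor of rooted $G$ if there are injective $\phi:V(H)\to V(G)$ and $\varphi$ from $E(H)$ to paths of $G$ with endpoints $\phi(u),\phi(v)$ for $\{u,v\}$, pairwise internally vertex-disjoint, with no vertex of $\phi(V(H))$ internal to any path, and $\rho_G(\phi(v))=\rho_H(v)$ for $v\in R(H)$; the subgraph formed by $\phi(V(H))$ and these paths is a realization. The $\delta$-folio is the set of rooted topological minors $H$ with $|E(H)|+\mathrm{is}(H)\le\delta$ ($\mathrm{is}$ = number of isolated vertices). A rooted graph $H$ is a (rooted) minor of rooted $G$ if there is $\psi:V(H)\to2^{V(G)}$ with pairwise disjoint sets inducing connected subgraphs, an edge of $G$ between $\psi(h),\psi(h')$ for each $\{h,h'\}\in E(H)$, and for each $u\in R(H)$ the root of $G$ with label $\rho_H(u)$ lying in $\psi(u)$. $H$ has detail $\le\delta'$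 if $|E(H)|\le\delta'$ and $|V(H)\setminus R(H)|\le\delta'$. The $\delta'$-minor folio of a graph $B'$ relative to $Q\subseteq V(B')$ (i.e. with $Q$ as root set, labelled injectively) is generic if it contains every rooted graph with root set labelled by the labels of $Q$ and detail $\le\delta'$. *)

From mathcomp Require Import all_boot.
Set Implicit Arguments. Unset Strict Implicit. Unset Printing Implicit Defensive.

Record sgraph (T : finType) := Graph { gV : {set T}; gE : {set {set T}} }.

Definition wf_graph (T : finType) (G : sgraph T) : Prop :=
  forall e, e \in gE G -> #|e| = 2 /\ e \subset gV G.

Record rooted (T : finType) :=
  RGraph { rg : sgraph T; groots : {set T}; lab : T -> nat }.

Definition wf_rgraph (T : finType) (G : rooted T) : Prop :=
  [/\ wf_graph (rg G), groots G \subset gV (rg G) & {in groots G &, injective (lab G)}].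

Definition separation (T : finType) (G A B : sgraph T) : Prop :=
  [/\ wf_graph A, wf_graph B,
      gV G = gV A :|: gV B, gE G = gE A :|: gE B & [disjoint gE A & gE B]].

Definition gdel (T : finType) (G : sgraph T) (S : {set T}) : sgraph T :=
  Graph (gV G :\: S) [set e in gE G | [disjoint e & S]].

Definition rdel (T : finType) (G : rooted T) (S : {set T}) : rooted T :=
  RGraph (gdel (rg G) S) (groots G :\: S) (lab G).

Definition is_path (T : finType) (G : sgraph T) (p : seq T) : Prop :=
  match p with
  | [::] => False
  | x :: s => [/\ x \in gV G, uniq p & path (fun a b => [set a; b] \in gE G) x s]
  end.

Definition pfirst (T : Type) (x0 : T) (p : seq T) := head x0 p.
Definition plast (T : Type) (x0 : T) (p : seq T) :=
  match p with [::] => x0 | x :: s => last x s end.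

Definition internal (T : Type) (p : seq T) : seq T :=
  match p with [::] => [::] | x :: s => behead (belast x s) end.

Definition pedges (T : finType) (p : seq T) : {set {set T}} :=
  match p with
  | [::] => set0
  | x :: s => [set [set a.1; a.2] | a in zip (x :: s) s]
  end.

Definition isolated (T : finType) (G : sgraph T) : {set T} :=
  [set v in gV G | [forall e in gE G, v \notin e]].

(* (phi, P) witnesses that rooted H is a rooted topological minor of rooted G:
   phi maps vertices to vertices, P maps each edge {u,v} of H to a path of G
   between phi u and phi v. *)
Definition topminor_witness (TH T : finType) (H : rooted TH) (G : rooted T)
    (phi : TH -> T) (P : {set TH} -> seq T) : Prop :=
  [/\ {in gV (rg H) &, injective phi} /\
        {in gV (rg H), forall v, phi v \in gV (rg G)},
      (forall e, e \in gE (rg H) -> exists u v, [/\ e = [set u; v],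
          is_path (rg G) (P e), pfirst (phi u) (P e) = phi u &
          plast (phi u) (P e) = phi v]),
      (forall e e', e \in gE (rg H) -> e' \in gE (rg H) -> e != e' ->
          [disjoint [set x in internal (P e)] & [set x in internal (P e')]]),
      (forall e v, e \in gE (rg H) -> v \in gV (rg H) -> phi v \notin internal (P e)) &
      (forall v, v \in groots H -> phi v \in groots G /\ lab G (phi v) = lab H v)].

Definition topminor (TH T : finType) (H : rooted TH) (G : rooted T) : Prop :=
  exists phi P, @topminor_witness TH T H G phi P.

Definition in_folio (TH T : finType) (delta : nat) (H : rooted TH) (G : rooted T) : Prop :=
  #|gE (rg H)| + #|isolated (rg H)| <= delta /\ topminor H G.

Definition realization (TH T : finType) (H : rooted TH)
    (phi : TH -> T) (P : {set TH} -> seq T) : sgraph T :=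
  Graph (phi @: gV (rg H) :|: \bigcup_(e in gE (rg H)) [set x in P e])
        (\bigcup_(e in gE (rg H)) pedges (P e)).

Definition closed_nbhd (T : finType) (G : sgraph T) (X : {set T}) : {set T} :=
  X :|: [set y in gV G | [exists x in X, [set x; y] \in gE G]].

Definition connected_in (T : finType) (G : sgraph T) (X : {set T}) : Prop :=
  X != set0 /\ X \subset gV G /\
  forall x y, x \in X -> y \in X ->
    exists s, [/\ path (fun a b => [&& a \in X, b \in X & [set a; b] \in gE G]) x s
                & last x s = y].

Definition rminor (T' T : finType) (H' : rooted T') (B' : sgraph T)
    (Q : {set T}) (lam : T -> nat) : Prop :=
  exists psi : T' -> {set T},
    [/\ (forall u, u \in gV (rg H') -> connected_in B' (psi u)),
        (forall u v, u \in gV (rg H') -> v \in gV (rg H') -> u != v ->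
             [disjoint psi u & psi v]),
        (forall u v, [set u; v] \in gE (rg H') -> u != v ->
             exists x y, [/\ x \in psi u, y \in psi v & [set x; y] \in gE B']) &
        (forall u, u \in groots H' -> exists2 q, q \in Q & lam q = lab H' u /\ q \in psi u)].

Definition detail_le (T' : finType) (H' : rooted T') (d : nat) : Prop :=
  #|gE (rg H')| <= d /\ #|gV (rg H') :\: groots H'| <= d.

Definition generic_minor_folio (T : finType) (d : nat) (B' : sgraph T)
    (Q : {set T}) (lam : T -> nat) : Prop :=
  forall (T' : finType) (H' : rooted T'), wf_rgraph H' ->
    [seq lab H' u | u in groots H'] =i [seq lam q | q in Q] -> detail_le H' d -> rminor H' B' Q lam.

From mathcomp Require Import all_boot.
From Stdlib Require Import IndefiniteDescription.
Set Implicit Arguments. Unset Strict Implicit. Unset Printing Implicit Defensive.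

(* A path P e of the realization that leaves A must cross the separator
   Q = V(A) ∩ V(B): it stays in A up to some a ∈ Q and again from some b ∈ Q
   on, and a, b are internal because the neighbours of branch vertices lie in A.
   The rooted graph on Q with one edge ab per such path has at most |E(H)| <= δ
   edges and no unrooted vertex, so genericity realizes it as a rooted minor of
   B \ S with branch sets psi q ∋ q, psi q ∩ V(A) = {q}.  Rerouting the middle
   of P e through psi a ∪ psi b and shortening gives a path of G \ S whose
   internal vertices lie in branch sets of internal vertices in A of the old
   path; these branch sets are pairwise disjoint and meet A only in their
   centre, so the new paths are again internally disjoint and avoid the branch
   vertices. *)

Section SeqFacts.
Variable T : eqType.
Implicit Types (p : pred T) (x y z : T) (s w : seq T).

Lemma split_first_predC p s : ~~ all p s ->
  exists w1 c w2, [/\ s = w1 ++ c :: w2, all p w1 & ~~ p c].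
Proof.
rewrite -has_predC => /split_find [c w1 w2 pc]; rewrite has_predC negbK => pw1.
by exists w1, c, w2; rewrite cat_rcons.
Qed.

Lemma split_last_predC p s : ~~ all p s ->
  exists w1 c w2, [/\ s = w1 ++ c :: w2, ~~ p c & all p w2].
Proof.
rewrite -all_rev => /split_first_predC [w1 [c [w2 [Es pw1 pc]]]].
exists (rev w2), c, (rev w1); rewrite all_rev; split=> //.
by rewrite -[s]revK Es rev_cat rev_cons cat_rcons.
Qed.

Lemma split_excursion p x s : p x -> p (last x s) -> ~~ all p s ->
  exists w1 c m b w2, [/\ s = w1 ++ c :: m ++ b :: w2, all p (x :: w1), ~~ p c,
    ~~ p (last c m) & all p (b :: w2)].
Proof.
move=> px plast /split_first_predC [w1 [c [t [Es pw1 pc]]]]; subst s.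
have /split_last_predC [l [d [r [Ect pd pr]]]] : ~~ all p (c :: t) by rewrite /= (negbTE pc).
case: r Ect pr => [|b w2] Ect pr.
  by move: plast; rewrite last_cat Ect last_cat /= (negbTE pd).
have [m [-> Ed]] : exists m, c :: t = c :: m ++ b :: w2 /\ last c m = d.
  case: l Ect => [|c' l] [-> ->]; first by exists [::].
  by exists (rcons l d); rewrite cat_rcons last_rcons.
by exists w1, c, m, b, w2; rewrite /= px pw1 Ed.
Qed.

Lemma internal_cat x w y t : t != [::] -> y \in internal (x :: w ++ y :: t).
Proof.
case: t => // t0 t _; elim: w x => [|w0 w IHw] x /=; first exact: mem_head.
exact: mem_behead (IHw w0).
Qed.

Lemma last_internal x w y t : w != [::] -> last x w \in internal (x :: w ++ y :: t).
Proof. by case/lastP: w => // w a _; rewrite last_rcons cat_rcons internal_cat. Qed.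

Lemma mem_internal x s z : z \in s -> z != last x s -> z \in internal (x :: s).
Proof.
case/splitPr=> s1 s2; rewrite last_cat /=.
by case: s2 => [|t0 t] /=; [rewrite eqxx | move=> _; apply: internal_cat].
Qed.

Lemma internal_inner x s z : uniq (x :: s) -> z \in internal (x :: s) ->
  z \in s /\ z != last x s.
Proof.
case: s => [|w s] //= /andP [_ us] zb.
split; first by rewrite lastI mem_rcons in_cons zb orbT.
apply: contraTneq zb => ->.
by move: us; rewrite -/(uniq (w :: s)) lastI rcons_uniq => /andP [].
Qed.

End SeqFacts.

Lemma mem_pedges_last (T : finType) (x y : T) (w t : seq T) :
  [set last x w; y] \in pedges (x :: w ++ y :: t).
Proof.
elim: w x => [|w0 w IHw] x /=; first by apply/imsetP; exists (x, y); rewrite ?mem_head.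
have /imsetP [[a1 a2] Ha ->] := IHw w0.
by apply/imsetP; exists (a1, a2); rewrite // in_cons Ha orbT.
Qed.

Section GraphFacts.
Variable T : finType.
Implicit Types (G A B : sgraph T) (S X : {set T}).

Definition adj G : rel T := fun a b => [set a; b] \in gE G.

Lemma adjC G : symmetric (adj G).
Proof. by move=> a b; rewrite /adj setUC. Qed.

Lemma adj_gdel G S a b : adj G a b -> a \notin S -> b \notin S -> adj (gdel G S) a b.
Proof.
rewrite /adj /gdel inE => -> aS bS /=; rewrite disjoint_subset.
by apply/subsetP => z; rewrite !inE => /orP [] /eqP ->.
Qed.

Lemma separation_adj_gdel G A B S : separation G A B ->
  subrel (adj (gdel B S)) (adj (gdel G S)).
Proof.
case=> _ _ _ EG _ a b; rewrite /adj /gdel !inE EG inE.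
by case/andP => -> ->; rewrite orbT.
Qed.

Lemma separation_cross G A B a c : separation G A B ->
  adj G a c -> a \in gV A -> c \notin gV A -> a \in gV A :&: gV B.
Proof.
case=> wfA wfB _ EG _; rewrite /adj EG inE => /orP [] /[dup] ac.
  by case/wfA=> _ /subsetP sA _ /negP []; apply: sA; rewrite !inE eqxx orbT.
by case/wfB=> _ /subsetP sB aA _; rewrite inE aA sB // !inE eqxx.
Qed.

Lemma connected_in_path G X x y : connected_in G X -> x \in X -> y \in X ->
  exists s, [/\ path (adj G) x s, last x s = y & {subset s <= X}].
Proof.
case=> _ [_ conn] xX yX; have [s [ps <-]] := conn x y xX yX.
exists s; split=> //; first by apply: sub_path ps => a b /and3P [].
elim: s x ps {xX yX conn} => [|b s IHs] x //= /andP [/and3P [_ bX _] ps] z.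
by rewrite in_cons => /orP [/eqP -> //|]; exact: IHs ps z.
Qed.

End GraphFacts.

Section Rerouting.
Variables (T : finType) (G : rooted T) (A B : sgraph T) (TH : finType) (H : rooted TH)
  (phi : TH -> T) (P : {set TH} -> seq T) (S : {set T}).
Hypotheses (sepG : separation (rg G) A B) (wfH : wf_rgraph H)
  (W : topminor_witness H G phi P)
  (ZA : groots G :|: closed_nbhd (realization H phi P) (phi @: gV (rg H)) \subset gV A)
  (SB : S \subset gV B :\: gV A).

Local Notation Q := (gV A :&: gV B).
Local Notation GS := (gdel (rg G) S).

Lemma notin_S z : z \in gV A -> z \notin S.
Proof. by move=> zA; apply: contraL zA => /(subsetP SB); rewrite inE => /andP []. Qed.

Lemma roots_in_A z : z \in groots G -> z \in gV A.
Proof. by move=> zR; apply: (subsetP ZA); rewrite inE zR. Qed.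

Lemma phi_in_A w : w \in gV (rg H) -> phi w \in gV A.
Proof. by move=> wH; apply: (subsetP ZA); rewrite !inE (imset_f phi wH) orbT. Qed.

Lemma realization_nbhd e y z : e \in gE (rg H) -> z \in P e ->
  [set y; z] \in pedges (P e) -> y \in phi @: gV (rg H) -> z \in gV A.
Proof.
move=> eH zP yz yphi; apply: (subsetP ZA); rewrite /closed_nbhd !inE.
apply/or3P/Or33/andP; split; first by apply/orP; right; apply/bigcupP; exists e; rewrite ?inE.
by apply/existsP; exists y; rewrite yphi; apply/bigcupP; exists e.
Qed.

Lemma path_GS_of_A x s :
  all [in gV A] (x :: s) -> path (adj (rg G)) x s -> path (adj GS) x s.
Proof. by apply: sub_in_path => a b aA bA ab; apply: adj_gdel; rewrite ?notin_S. Qed.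

Lemma edge_route e : e \in gE (rg H) -> exists u v s,
  [/\ e = [set u; v], u \in gV (rg H), v \in gV (rg H), P e = phi u :: s &
      [/\ last (phi u) s = phi v, uniq (phi u :: s) & path (adj (rg G)) (phi u) s]].
Proof.
move=> eH; case: W => _ /(_ e eH) [u [v [euv pe first_u last_v]]] _ _ _.
have [_ /subsetP eV] : #|e| = 2 /\ e \subset gV (rg H) by case: wfH => wfHg _ _; apply: wfHg.
have uH : u \in gV (rg H) by apply: eV; rewrite euv !inE eqxx.
have vH : v \in gV (rg H) by apply: eV; rewrite euv !inE eqxx orbT.
case: (P e) pe first_u last_v => [|x s] // [_ us ps] /= xu lv.
by exists u, v, s; rewrite -xu.
Qed.

Definition crossing e a b : Prop :=
  [/\ a \in Q, b \in Q, a != b, a \in internal (P e) & b \in internal (P e)] /\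
  exists x w1 m w2, [/\ P e = x :: w1 ++ m ++ b :: w2, last x w1 = a,
                       all [in gV A] (x :: w1) & all [in gV A] (b :: w2)].

Lemma exists_crossing e : e \in gE (rg H) -> ~~ all [in gV A] (P e) ->
  exists a b, crossing e a b.
Proof.
move=> eH; have [u [v [s [_ uH vH Pe [lv us ps]]]]] := edge_route eH.
have uA := phi_in_A uH; have lA : last (phi u) s \in gV A by rewrite lv phi_in_A.
rewrite Pe /= uA => /(split_excursion uA lA) [w1 [c [m [b [w2 [Es Aw1 cA mA Aw2]]]]]].
subst s; move: ps; rewrite cat_path /= cat_path /= => /and5P [_ ac _ mb _].
have aA : last (phi u) w1 \in gV A by apply: (allP Aw1); apply: mem_last.
have [bA _] := andP Aw2.
have ab : last (phi u) w1 != b.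
  move: us; rewrite -(cat_cons (phi u) w1) cat_uniq => /and3P [_ /hasPn/(_ b) + _].
  rewrite !(mem_cat, in_cons) eqxx !orbT => /(_ isT).
  by apply: contraNneq => <-; apply: mem_last.
have w1_nonempty : w1 != [::].
  apply: contraNneq cA => w1E; apply: (realization_nbhd eH) (imset_f phi uH).
    by rewrite Pe !(in_cons, mem_cat) eqxx !orbT.
  by rewrite Pe w1E; exact: (mem_pedges_last (phi u) c [::] (m ++ b :: w2)).
have w2_nonempty : w2 != [::].
  apply: contraNneq mA => w2E; apply: (realization_nbhd eH (y := b)).
  - by rewrite Pe -(cat_cons c) in_cons !mem_cat mem_last !orbT.
  - have -> : last c m = last (phi u) (w1 ++ c :: m) by rewrite last_cat.
    by rewrite setUC Pe -(cat_cons c) catA; apply: mem_pedges_last.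
  - by move: lv; rewrite w2E last_cat /= last_cat /= => ->; apply: imset_f.
exists (last (phi u) w1), b; split; first split=> //.
- exact: separation_cross sepG ac aA cA.
- by apply: separation_cross sepG _ bA mA; rewrite adjC.
- by rewrite Pe last_internal.
- by rewrite Pe -(cat_cons c) catA internal_cat.
by exists (phi u), w1, (c :: m), w2.
Qed.

Definition rerouted : {set {set TH}} := [set e in gE (rg H) | ~~ all [in gV A] (P e)].

Lemma exists_crossing_choice : exists g : {set TH} -> {set T},
  forall e, e \in rerouted -> exists a b, g e = [set a; b] /\ crossing e a b.
Proof.
apply: (functional_choice
  (fun e f => e \in rerouted -> exists a b, f = [set a; b] /\ crossing e a b)) => e.
case: (boolP (e \in rerouted)) => [|eR]; last by exists set0.
rewrite inE => /andP [eH out]; have [a [b ab]] := exists_crossing eH out.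
by exists [set a; b] => _; exists a, b.
Qed.

Variables (lam : T -> nat) (g : {set TH} -> {set T}).
Hypotheses (g_crossing : forall e, e \in rerouted -> exists a b, g e = [set a; b] /\ crossing e a b)
  (lam_inj : {in Q &, injective lam}).

Definition crossing_graph : rooted T := RGraph (Graph Q (g @: rerouted)) Q lam.

Lemma wf_crossing_graph : wf_rgraph crossing_graph.
Proof.
split=> //= f /imsetP [e /g_crossing [a [b [-> [[aQ bQ ab _ _] _]]]] ->].
by rewrite cards2 ab; split=> //; apply/subsetP => z /set2P [] ->.
Qed.

Lemma detail_crossing_graph d : #|gE (rg H)| <= d -> detail_le crossing_graph d.
Proof.
move=> Hd; split=> /=; last by rewrite setDv cards0.
apply: leq_trans (leq_imset_card _ _) (leq_trans (subset_leq_card _) Hd).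
by apply/subsetP => e; rewrite inE => /andP [].
Qed.

Variable psi : T -> {set T}.
Hypotheses (psi_conn : forall q, q \in Q -> connected_in (gdel B S) (psi q))
  (psi_disjoint : forall q q', q \in Q -> q' \in Q -> q != q' -> [disjoint psi q & psi q'])
  (psi_edge : forall a b, [set a; b] \in g @: rerouted -> a != b ->
     exists x y, [/\ x \in psi a, y \in psi b & adj (gdel B S) x y])
  (psi_root : forall q, q \in Q -> exists2 q', q' \in Q & lam q' = lam q /\ q' \in psi q).

Lemma psi_self q : q \in Q -> q \in psi q.
Proof. by move=> qQ; have [q' q'Q [/(lam_inj q'Q qQ) <-]] := psi_root qQ. Qed.

Lemma psi_eq q q' z : q \in Q -> q' \in Q -> z \in psi q -> z \in psi q' -> q = q'.
Proof.
move=> qQ q'Q zq; apply: contraTeq => qq'.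
by rewrite (disjointFr (psi_disjoint qQ q'Q qq') zq).
Qed.

Lemma psi_A q z : q \in Q -> z \in psi q -> z \in gV A -> z = q.
Proof.
move=> qQ zq zA; have [_ [/subsetP sub _]] := psi_conn qQ.
have zQ : z \in Q by have := sub z zq; rewrite !inE zA => /andP [_ ->].
exact: psi_eq zQ qQ (psi_self zQ) zq.
Qed.

Definition branch q : {set T} := if q \in Q then psi q else [set q].

Lemma branch_self q : q \in branch q.
Proof. by rewrite /branch; case: ifP => [/psi_self|_]; rewrite ?set11. Qed.

Lemma branch_A q z : z \in branch q -> z \in gV A -> z = q.
Proof. by rewrite /branch; case: ifP => [qQ /(psi_A qQ)|_ /set1P ->]. Qed.

Lemma branch_eq q q' z : q \in gV A -> q' \in gV A ->
  z \in branch q -> z \in branch q' -> q = q'.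
Proof.
move=> qA q'A zq zq'; have [zA|zA] := boolP (z \in gV A).
  by rewrite -(branch_A zq zA) (branch_A zq' zA).
have psi_of p : p \in gV A -> z \in branch p -> p \in Q /\ z \in psi p.
  by rewrite /branch; case: ifP => // _ pA /set1P zp; rewrite zp pA in zA.
by have [[qQ zpq] [q'Q zpq']] := (psi_of q qA zq, psi_of q' q'A zq'); apply: psi_eq zpq zpq'.
Qed.

Definition covered e z := exists q, [/\ q \in internal (P e), q \in gV A & z \in branch q].

Lemma covered_route e x s z :
  P e = x :: s -> z \in s -> z \in gV A -> z != last x s -> covered e z.
Proof. by move=> Pe zs zA zl; exists z; rewrite Pe mem_internal // branch_self. Qed.

Lemma bridge_walk e a b : e \in rerouted -> g e = [set a; b] -> crossing e a b ->
  exists w, [/\ path (adj GS) a w, last a w = b & {subset w <= psi a :|: psi b}].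
Proof.
move=> eR ge [[aQ bQ ab _ _] _].
have [x [y [xa yb xy]]] : exists x y, [/\ x \in psi a, y \in psi b & adj (gdel B S) x y].
  by apply: psi_edge ab; rewrite -ge imset_f.
have [s1 [p1 l1 sub1]] := connected_in_path (psi_conn aQ) (psi_self aQ) xa.
have [s2 [p2 l2 sub2]] := connected_in_path (psi_conn bQ) yb (psi_self bQ).
have BG : subrel (adj (gdel B S)) (adj GS) := separation_adj_gdel sepG.
exists (s1 ++ y :: s2); split; last 1 first.
- by move=> z; rewrite mem_cat in_cons inE => /or3P [/sub1 ->|/eqP ->|/sub2 ->]; rewrite ?yb ?orbT.
- by rewrite cat_path l1 /= BG ?(sub_path BG).
- by rewrite last_cat l1.
Qed.

Lemma crossing_walk e u s a b : e \in rerouted -> P e = phi u :: s ->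
  path (adj (rg G)) (phi u) s -> g e = [set a; b] -> crossing e a b ->
  exists w, [/\ path (adj GS) (phi u) w, last (phi u) w = last (phi u) s &
               {in w, forall z, z != last (phi u) s -> covered e z}].
Proof.
move=> eR Pe ps ge cr; have [wb [pb lb subb]] := bridge_walk eR ge cr.
case: cr => [[aQ bQ _ ai bi] [x [w1 [m [w2 [Pe' la Aw1 Aw2]]]]]].
move: Pe'; rewrite Pe => -[ux Es]; subst x s.
move: ps; rewrite cat_path cat_path /= => /and4P [pw1 _ _ pw2].
exists (w1 ++ wb ++ w2); split.
- by rewrite cat_path (path_GS_of_A Aw1 pw1) la cat_path pb lb (path_GS_of_A Aw2 pw2).
- by rewrite !last_cat la lb.
move=> z; rewrite !mem_cat => /or3P [zw|/subb zab|zw] zl.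
- apply: covered_route Pe _ _ zl; first by rewrite mem_cat zw.
  by apply: (allP Aw1); rewrite in_cons zw orbT.
- move: zab; rewrite inE => /orP [za|zb]; [exists a | exists b]; rewrite /branch ?aQ ?bQ.
    by split=> //; case/setIP: aQ.
  by split=> //; case/setIP: bQ.
- apply: covered_route Pe _ _ zl; first by rewrite !(mem_cat, in_cons) zw !orbT.
  by apply: (allP Aw2); rewrite in_cons zw orbT.
Qed.

Lemma reroute_path e : e \in gE (rg H) -> exists u v p,
  [/\ e = [set u; v], is_path GS p, pfirst (phi u) p = phi u, plast (phi u) p = phi v &
      {in internal p, forall z, covered e z}].
Proof.
move=> eH; have [u [v [s [euv uH _ Pe [lv us ps]]]]] := edge_route eH.
have [w [pw lw cov]] : exists w, [/\ path (adj GS) (phi u) w, last (phi u) w = phi v &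
    {in w, forall z, z != phi v -> covered e z}].
  rewrite -lv; case: (boolP (e \in rerouted)) => [eR|].
    by have [a [b [ge cr]]] := g_crossing eR; apply: crossing_walk eR Pe ps ge cr.
  rewrite inE eH negbK Pe => sA; exists s; split=> //; first exact: path_GS_of_A.
  move=> z zs; have zA : z \in gV A by apply: (allP sA); rewrite in_cons zs orbT.
  exact: covered_route Pe zs zA.
case: (shortenP pw) lw => p pp up sub_p lp.
exists u, v, (phi u :: p); split=> //.
  by split=> //; case: W => [[_ phiV] _ _ _ _]; rewrite inE phiV // notin_S // phi_in_A.
by move=> z /(internal_inner up) [zp zl]; apply: cov (sub_p z zp) _; rewrite -lp.
Qed.

Lemma topminor_rerouted : topminor H (rdel G S).
Proof.
pose route e p := e \in gE (rg H) -> exists u v,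
  [/\ e = [set u; v], is_path GS p, pfirst (phi u) p = phi u, plast (phi u) p = phi v &
      {in internal p, forall z, covered e z}].
have [P' P'_route] : exists P' : {set TH} -> seq T, forall e, route e (P' e).
  apply: functional_choice => e; rewrite /route; case: (boolP (e \in gE (rg H))) => [eH|eH].
    by have [u [v [p ?]]] := reroute_path eH; exists p => _; exists u, v.
  by exists [::].
have covered_P' e z : e \in gE (rg H) -> z \in internal (P' e) -> covered e z.
  by move=> eH; have [_ [_ [_ _ _ _ cov]]] := P'_route e eH; apply: cov.
case: W => [[phi_inj phiV] _ P_disj P_branch P_root].
exists phi, P'; split.
- by split=> // w wH; rewrite inE phiV // notin_S // phi_in_A.
- by move=> e /P'_route [u [v [? ? ? ? _]]]; exists u, v.
- move=> e e' eH e'H ee'; rewrite disjoint_subset; apply/subsetP => z; rewrite !inE => ze.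
  apply: contraL (P_disj e e' eH e'H ee') => ze'.
  have [q [qe qA zq]] := covered_P' e z eH ze.
  have [q' [qe' q'A zq']] := covered_P' e' z e'H ze'.
  rewrite (branch_eq qA q'A zq zq') in qe; rewrite disjoint_subset; apply/negP.
  by move/subsetP/(_ q'); rewrite !inE qe qe' => /(_ isT).
- move=> e w eH wH; apply/negP => /(covered_P' _ _ eH) [q [qe _ wq]].
  by move: (P_branch e w eH wH); rewrite (branch_A wq (phi_in_A wH)) qe.
- by move=> w /P_root [rG ->]; rewrite inE rG notin_S // roots_in_A.
Qed.

End Rerouting.

Theorem lemma4p8 (T : finType) (G : rooted T) (A B : sgraph T) (delta : nat)
    (TH : finType) (H : rooted TH) (phi : TH -> T) (P : {set TH} -> seq T)
    (S : {set T}) (lam : T -> nat) :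
  wf_rgraph G -> separation (rg G) A B -> wf_rgraph H ->
  #|gE (rg H)| + #|isolated (rg H)| <= delta ->
  topminor_witness H G phi P ->
  groots G :|: closed_nbhd (realization H phi P) (phi @: gV (rg H)) \subset gV A ->
  S \subset gV B :\: gV A ->
  {in gV A :&: gV B &, injective lam} ->
  generic_minor_folio (4 * delta) (gdel B S) (gV A :&: gV B) lam ->
  in_folio delta H (rdel G S).
Proof.
move=> _ sepG wfH size_H W ZA SB lam_inj generic; split=> //.
have [g g_crossing] := exists_crossing_choice sepG wfH W ZA.
have EH_le : #|gE (rg H)| <= 4 * delta.
  by apply: leq_trans (leq_addr _ _) (leq_trans size_H _); rewrite leq_pmull.
have [psi [conn disj edge root]] := generic _ _ (wf_crossing_graph g_crossing lam_inj)
  (fun _ => erefl) (detail_crossing_graph A B P lam g EH_le).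
exact: (topminor_rerouted sepG wfH W ZA SB g_crossing lam_inj conn disj edge root).
Qed.
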